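(* If $M'$ is a minor of a finite matroid $M$, then $\mathrm{bd}(M')\le\mathrm{bd}(M)$.
   Context: For a rooted tree $T$, $\|T\|$ is its number of edges and its depth is the number of edges of a longest root-to-leaf path. A depth-decomposition of a finite matroid $M$ (rank function $r$) is a pair $(T,f)$ with $T$ a rooted tree and $f:M\to V(T)$ such that (1) $r(M)=\|T\|$ and (2) $r(X)\le\|T^*(X)\|$ for every $X\subseteq M$, where $T^*(X)$ is the union of the paths from the root to all vertices of $f(X)$. The branch-depth $\mathrm{bd}(M)$ is the minimum depth of $T$ over all depth-decompositions $(T,f)$ of $M$. *)

From Stdlib Require Import ClassicalEpsilon.
From HB Require Import structures.
From mathcomp Require Import all_boot.

Set Implicit Arguments.
Unset Strict Implicit.
Unset Printing Implicit Defensive.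

(* Finite matroids, given by a rank function.  All matroids live over  *)
(* a fixed finite carrier type E; the matroid itself has ground set    *)
(* [ground M] (a subset of E) and rank function [rk M], whose values   *)
(* are only meaningful on subsets of the ground set.                   *)
Record matroid (E : finType) := Matroid {
  ground : {set E};
  rk : {set E} -> nat;
  rk_card : forall X : {set E}, X \subset ground -> rk X <= #|X|;
  rk_mono : forall X Y : {set E}, Y \subset ground -> X \subset Y -> rk X <= rk Y;
  rk_submod : forall X Y : {set E}, X \subset ground -> Y \subset ground ->
                rk (X :|: Y) + rk (X :&: Y) <= rk X + rk Y
}.

(* M' is a minor of M : M' = (M / C) \ D with C, D disjoint subsets of
   the ground set of M, D = ground M - ground M' - C; the rank of the
   contraction M / C is X |-> r(X u C) - r(C). *)
Definition is_minor (E : finType) (M' M : matroid E) : Prop :=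
  ground M' \subset ground M /\
  exists C : {set E}, C \subset ground M :\: ground M' /\
    forall X : {set E}, X \subset ground M' -> rk M' X = rk M (X :|: C) - rk M C.

(* iterating the parent map.  The edges are {v, parent v}, v <> root.  *)
Record rtree (V : finType) := RTree {
  troot : V;
  tpar : V -> V;
  tpar_root : tpar troot = troot;
  treach : forall v, fconnect tpar v troot
}.

(* ||T|| : number of edges = number of non-root vertices *)
Definition tedges (V : finType) (T : rtree V) : nat :=
  #|[set v | v != troot T]|.

Definition tdist (V : finType) (T : rtree V) (v : V) : nat :=
  findex (tpar T) v (troot T).

Definition tdepth (V : finType) (T : rtree V) : nat :=
  \max_(v : V) tdist T v.

(* ||T^*(X)|| : number of edges of the union of the root paths to the
   vertices of f(X), i.e. number of non-root vertices that are ancestors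
   (or equal to) some f x, x in X. *)
Definition tstar_edges (E V : finType) (T : rtree V) (f : E -> V)
    (X : {set E}) : nat :=
  #|[set u | (u != troot T) && [exists x in X, fconnect (tpar T) (f x) u]]|.

Definition depth_decomposition (E V : finType) (M : matroid E)
    (T : rtree V) (f : E -> V) : Prop :=
  rk M (ground M) = tedges T /\
  forall X : {set E}, X \subset ground M -> rk M X <= tstar_edges T f X.

Definition has_dd_of_depth (E : finType) (M : matroid E) (k : nat) : Prop :=
  exists (V : finType) (T : rtree V) (f : E -> V),
    depth_decomposition M T f /\ tdepth T = k.

Definition asbool (P : Prop) : bool :=
  if excluded_middle_informative P then true else false.

Lemma asboolP (P : Prop) : reflect P (asbool P).
Proof.
rewrite /asbool; case: excluded_middle_informative => H; by constructor.
Qed.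

(* Existence of a depth-decomposition (a path of length r(M)). *)
Lemma dd_exists (E : finType) (M : matroid E) :
  exists k, asbool (has_dd_of_depth M k).
Proof.
set r := rk M (ground M).
pose par (i : 'I_r.+1) : 'I_r.+1 := inord i.-1.
have iterP (i : 'I_r.+1) k : val (iter k par i) = i - k.
  elim: k => [|k IH] /=; first by rewrite subn0.
  rewrite /par inordK; first by rewrite IH subnS.
  exact: leq_ltn_trans (leq_pred _) (ltn_ord _).
have par0 : par ord0 = ord0 by apply: val_inj; rewrite /par /= inordK.
have reach v : fconnect par v ord0.
  have -> : ord0 = iter v par v by apply: val_inj; rewrite iterP subnn.
  exact: fconnect_iter.
pose T := RTree par0 reach.
pose f := fun _ : E => (ord_max : 'I_r.+1).
have Hed : [set v | v != troot T] = [set~ ord0].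
  by apply/setP => v; rewrite !inE.
exists (tdepth T); apply/asboolP; exists 'I_r.+1, T, f; split => //; split.
  by rewrite /tedges Hed cardsC1 card_ord.
move=> X HX; have [-> | [x Hx]] := set_0Vmem X.
  by apply: leq_trans (rk_card (sub0set _)) _; rewrite cards0.
have -> : tstar_edges T f X = r.
  apply: eq_trans (_ : #|[set~ (ord0 : 'I_r.+1)]| = r); last first.
    by rewrite cardsC1 card_ord.
  rewrite /tstar_edges; apply: eq_card => u; rewrite !inE.
  case: eqP => //= _; apply/existsP; exists x; rewrite Hx /=.
  have -> : u = iter (r - u) par ord_max.
    by apply: val_inj; rewrite iterP /= subKn // -ltnS.
  exact: fconnect_iter.
exact: rk_mono (subxx _) HX.
Qed.

Definition bd (E : finType) (M : matroid E) : nat := ex_minn (dd_exists M).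

(* Deleting or contracting one element e lowers the rank of the ground set by
   d <= 1.  If d = 0, a depth-decomposition (T, f) of the matroid is still one of
   the minor.  If d = 1, then f e is not the root (as r {e} >= 1) and we contract
   the tree edge between f e and its parent: this removes one edge, does not
   increase the depth, and shrinks ||T^*(X)|| by one exactly when f e lies on a
   root path of f(X); then T^*(X) = T^*(X + e), and the rank bound for X + e pays
   for the lost edge.  Any minor is reached one element at a time. *)

From HB Require Import structures.
From mathcomp Require Import all_boot zify.

Set Implicit Arguments.
Unset Strict Implicit.
Unset Printing Implicit Defensive.

Lemma findex_le_iter (V : finType) (f : V -> V) x y m :
  iter m f x = y -> findex f x y <= m.
Proof.
move=> fmx; have xy : fconnect f x y by rewrite -fmx fconnect_iter.
case: (ltnP m (order f x)) => [m_lt|m_ge]; first by rewrite -fmx findex_iter.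
exact: ltnW (leq_trans (findex_max xy) m_ge).
Qed.

Definition tstar (E V : finType) (T : rtree V) (f : E -> V) (X : {set E}) :=
  [set u | (u != troot T) && [exists x in X, fconnect (tpar T) (f x) u]].

Lemma tstar_edgesE (E V : finType) (T : rtree V) (f : E -> V) X :
  tstar_edges T f X = #|tstar T f X|.
Proof. by []. Qed.

Section RootedTree.
Variables (V : finType) (T : rtree V).
Local Notation p := (tpar T).

Lemma iter_tpar_root n : iter n p (troot T) = troot T.
Proof. by elim: n => //= n ->; exact: tpar_root. Qed.

Lemma tpar_neq {v : V} : v != troot T -> p v != v.
Proof.
move=> v_nonroot; apply: contra v_nonroot => /eqP pv.
have iter_v n : iter n p v = v by elim: n => //= n ->.
by rewrite -(iter_findex (treach T v)) iter_v.
Qed.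

Lemma tstar_edges_root (E : finType) (f : E -> V) e :
  f e = troot T -> tstar_edges T f [set e] = 0.
Proof.
move=> fe_root; apply/eqP; rewrite cards_eq0; apply/eqP/setP => u.
rewrite !inE; apply/negbTE/andP => [[u_nonroot /existsP[x]]].
rewrite inE => /andP[/eqP-> /iter_findex]; rewrite fe_root iter_tpar_root => ru.
by rewrite -ru eqxx in u_nonroot.
Qed.

Lemma tstar_setU1 (E : finType) (f : E -> V) e X :
  f e \in tstar T f X -> tstar T f (e |: X) = tstar T f X.
Proof.
rewrite inE => /andP[_ /existsP[y /andP[yX y_fe]]].
apply/setP => u; rewrite !inE; case: (u != _) => //=.
apply/existsP/existsP => [[x /andP[]]|[x /andP[xX xu]]]; last first.
  by exists x; rewrite in_setU1 xX orbT.
rewrite in_setU1 => /orP[/eqP-> eu|xX xu]; last by exists x; rewrite xX.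
by exists y; rewrite yX (connect_trans y_fe).
Qed.

End RootedTree.

(* Contracting the edge between a non-root vertex v and its parent: v is
   removed and its children are reattached to the parent of v. *)
Section ContractVertex.
Variables (V : finType) (T : rtree V) (v : V).
Hypothesis v_nonroot : v != troot T.
Local Notation p := (tpar T).

Definition skipv x := if x == v then p v else x.
Definition cstep x := skipv (p x).

Lemma skipv_neq x : skipv x != v.
Proof. by rewrite /skipv; case: (eqVneq x v) => // _; exact: tpar_neq v_nonroot. Qed.

Lemma fconnect_skipv x w : w != v -> fconnect p (skipv x) w = fconnect p x w.
Proof.
move=> wv; rewrite /skipv; case: eqVneq => [->|//].
by rewrite [RHS]fconnect_eqVf eq_sym (negbTE wv).
Qed.

Lemma fconnect_iter_cstep m x : fconnect p x (iter m cstep x).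
Proof.
elim: m x => [|m IH] x; first exact: connect0.
rewrite iterSr; apply: connect_trans (IH _).
rewrite /cstep /skipv; case: eqVneq => [<-|_]; last exact: fconnect1.
exact: connect_trans (fconnect1 _ _) (fconnect1 _ _).
Qed.

Lemma iter_cstep_le n x y : x != v -> y != v -> iter n p x = y ->
  exists2 m, m <= n & iter m cstep x = y.
Proof.
elim/ltn_ind: n x => -[|n] IH x xv yv; first by move=> /= <-; exists 0.
rewrite iterSr; case: (eqVneq (p x) v) => pxv; last first.
  move=> /(IH n (ltnSn n) _ pxv yv)[m mn pxy].
  by exists m.+1; rewrite // iterSr /cstep /skipv (negbTE pxv).
case: n IH => [_ /= pxy|n IH]; first by rewrite -pxy pxv eqxx in yv.
rewrite iterSr pxv => pvy.
have [m mn pvy'] := IH n (leqW (ltnSn n)) (p v) (tpar_neq v_nonroot) yv pvy.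
by exists m.+1; rewrite ?ltnS ?(leqW mn) // iterSr /cstep /skipv pxv eqxx.
Qed.

Definition cvertex := {u : V | u != v}.

Lemma troot_neq : troot T != v. Proof. by rewrite eq_sym. Qed.

Definition croot : cvertex := Sub (troot T) troot_neq.
Definition cpar (u : cvertex) : cvertex := Sub (cstep (val u)) (skipv_neq _).

Lemma cpar_root : cpar croot = croot.
Proof. by apply: val_inj; rewrite /= /cstep tpar_root /skipv (negbTE troot_neq). Qed.

Lemma val_iter_cpar n u : val (iter n cpar u) = iter n cstep (val u).
Proof. by elim: n => //= n ->. Qed.

Lemma fconnect_cpar u w : fconnect cpar u w = fconnect p (val u) (val w).
Proof.
apply/idP/idP => [/iter_findex <-|/iter_findex].
  by rewrite val_iter_cpar fconnect_iter_cstep.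
case/(iter_cstep_le (valP u) (valP w)) => m _ uw.
have -> : w = iter m cpar u by apply: val_inj; rewrite val_iter_cpar.
exact: fconnect_iter.
Qed.

Lemma creach u : fconnect cpar u croot.
Proof. by rewrite fconnect_cpar; exact: treach. Qed.

Definition ctree := RTree cpar_root creach.

Lemma card_cvertex (P : pred V) :
  #|[set u : cvertex | P (val u)]| = #|[set x | x != v & P x]|.
Proof.
rewrite -(card_imset _ val_inj); congr #|pred_of_set _|; apply/setP => x.
rewrite inE; apply/imsetP/andP => [[u]|[xv Px]]; last by exists (Sub x xv); rewrite ?inE.
by rewrite inE => Pu ->; split => //; exact: (valP u).
Qed.

Lemma tedges_ctree : tedges ctree = tedges T - 1.
Proof.
rewrite /tedges (cardsD1 v [set x | x != troot T]) inE v_nonroot add1n subn1.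
under eq_finset => u do rewrite -(inj_eq val_inj).
rewrite (card_cvertex (fun x => x != troot T)).
by congr #|pred_of_set _|; apply/setP => x; rewrite !inE.
Qed.

Variables (E : finType) (f : E -> V).

Definition cmap (x : E) : cvertex := Sub (skipv (f x)) (skipv_neq _).

Lemma tstar_edges_ctree X :
  tstar_edges ctree cmap X = tstar_edges T f X - (v \in tstar T f X).
Proof.
rewrite !tstar_edgesE [in RHS](cardsD1 v) addKn /tstar /=.
under eq_finset => u.
  rewrite -(inj_eq val_inj) /=.
  under eq_existsb => x do rewrite fconnect_cpar /= fconnect_skipv ?(valP u) //.
  over.
rewrite (card_cvertex (fun y => (y != troot T) && [exists x in X, fconnect p (f x) y])).
by congr #|pred_of_set _|; apply/setP => x; rewrite !inE.
Qed.

Lemma tdepth_ctree : tdepth ctree <= tdepth T.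
Proof.
apply/bigmax_leqP => u _; apply: leq_trans (leq_bigmax (val u)).
have [m mu um] := iter_cstep_le (valP u) troot_neq (iter_findex (treach T (val u))).
by apply: leq_trans mu; apply: findex_le_iter; apply: val_inj; rewrite val_iter_cpar.
Qed.

End ContractVertex.

Lemma tree_contraction (E V : finType) (T : rtree V) (f : E -> V) v :
  v != troot T ->
  exists (V' : finType) (T' : rtree V') (f' : E -> V'),
    [/\ tedges T' = tedges T - 1, tdepth T' <= tdepth T &
        forall X, tstar_edges T' f' X = tstar_edges T f X - (v \in tstar T f X)].
Proof.
move=> v_nonroot; exists (cvertex v), (ctree v_nonroot), (cmap v_nonroot f).
by split; [exact: tedges_ctree | exact: tdepth_ctree | exact: tstar_edges_ctree].
Qed.

Section Matroid.
Variable E : finType.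
Implicit Types (M N : matroid E) (C X Y S : {set E}) (e : E) (k : nat).

Lemma rk0 M : rk M set0 = 0.
Proof. by apply/eqP; rewrite -leqn0 -(cards0 E) rk_card ?sub0set. Qed.

Lemma rk1 M e : e \in ground M -> rk M [set e] <= 1.
Proof. by move=> eM; rewrite -(cards1 e) rk_card ?sub1set. Qed.

Fact restriction_subset M S X : X \subset S :&: ground M -> X \subset ground M.
Proof. by move/subset_trans; apply; exact: subsetIr. Qed.

Definition restriction M S : matroid E :=
  @Matroid E (S :&: ground M) (rk M)
    (fun X XS => rk_card (restriction_subset XS))
    (fun X Y YS => rk_mono (restriction_subset YS))
    (fun X Y XS YS => rk_submod (restriction_subset XS) (restriction_subset YS)).

Section Contraction.
Variables (M : matroid E) (C : {set E}).
Hypothesis C_M : C \subset ground M.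

Let r X := rk M (X :|: C) - rk M C.

Fact contraction_subset X : X \subset ground M :\: C -> X :|: C \subset ground M.
Proof. by rewrite subsetD subUset C_M andbT => /andP[]. Qed.

Let rkC X : X \subset ground M :\: C -> rk M C <= rk M (X :|: C).
Proof. by move=> XG; apply: rk_mono (contraction_subset XG) (subsetUr X C). Qed.

Fact contraction_rk_card X : X \subset ground M :\: C -> r X <= #|X|.
Proof.
move=> /contraction_subset XCM; have XM := subset_trans (subsetUl X C) XCM.
by have := rk_submod XM C_M; have := rk_card XM; rewrite /r; lia.
Qed.

Fact contraction_rk_mono X Y : Y \subset ground M :\: C -> X \subset Y -> r X <= r Y.
Proof.
move=> YG XY; have := rk_mono (contraction_subset YG) (setSU C XY).
by have := rkC (subset_trans XY YG); rewrite /r; lia.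
Qed.

Fact contraction_rk_submod X Y : X \subset ground M :\: C -> Y \subset ground M :\: C ->
  r (X :|: Y) + r (X :&: Y) <= r X + r Y.
Proof.
move=> XG YG; have := rk_submod (contraction_subset XG) (contraction_subset YG).
rewrite -setUIl setUACA setUid.
have := rkC (subset_trans (subsetIl X Y) XG); have := rkC (X := X :|: Y).
by rewrite subUset XG YG /r; lia.
Qed.

Definition contraction : matroid E :=
  Matroid contraction_rk_card contraction_rk_mono contraction_rk_submod.

End Contraction.

Definition bd_le M k := exists (V : finType) (T : rtree V) (f : E -> V),
  depth_decomposition M T f /\ tdepth T <= k.

Lemma bd_le_bd M : bd_le M (bd M).
Proof.
rewrite /bd; case: ex_minnP => k /asboolP [V [T [f [dd <-]]]] _.
by exists V, T, f.
Qed.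

Lemma bd_min M k : bd_le M k -> bd M <= k.
Proof.
move=> [V [T [f [dd depth_k]]]]; rewrite /bd; case: ex_minnP => d _ /(_ (tdepth T)).
by move=> min_d; apply: leq_trans (min_d _) depth_k; apply/asboolP; exists V, T, f.
Qed.

Lemma bd_le_ext M N k : ground N = ground M ->
  (forall X, X \subset ground M -> rk N X = rk M X) -> bd_le M k -> bd_le N k.
Proof.
move=> gN rkN [V [T [f [[rkT decT] depth_k]]]]; exists V, T, f; split => //.
split => [|X]; first by rewrite gN rkN.
by rewrite gN => XM; rewrite rkN //; exact: decT.
Qed.

Lemma bd_le_remove M N e d k :
  e \in ground M -> ground N = ground M :\ e -> d <= 1 ->
  rk N (ground N) + d = rk M (ground M) ->
  (forall X, X \subset ground N -> rk N X <= rk M X /\ rk N X + d <= rk M (e |: X)) ->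
  bd_le M k -> bd_le N k.
Proof.
move=> eM gN d_le1 rkN rkNX [V [T [f [[rkT decT] depth_k]]]].
have subM X : X \subset ground N -> X \subset ground M.
  by rewrite gN => /subset_trans; apply; exact: subD1set.
have eXM X : X \subset ground N -> e |: X \subset ground M.
  by move=> XN; rewrite subUset sub1set eM subM.
case: d d_le1 rkN rkNX => [_|[_|//]] rkN rkNX.
  exists V, T, f; split => //; split => [|X XN]; first by rewrite -rkT -rkN addn0.
  by have [le _] := rkNX X XN; apply: leq_trans le (decT X (subM X XN)).
have fe_nonroot : f e != troot T.
  apply/eqP => /tstar_edges_root fe0.
  have [_ +] := rkNX _ (sub0set _); have := decT _ (eXM _ (sub0set _)).
  by rewrite setU0 fe0; lia.
have [V' [T' [f' [edgesT' depthT' tstarT']]]] := tree_contraction f fe_nonroot.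
exists V', T', f'; split; last exact: leq_trans depthT' depth_k.
split => [|X XN]; first by rewrite edgesT' -rkT -rkN addn1 subn1.
have [le1 le2] := rkNX X XN; rewrite tstarT'.
case: (boolP (f e \in tstar T f X)) => [feX|_]; last first.
  by rewrite subn0; apply: leq_trans le1 (decT X (subM X XN)).
by have := decT _ (eXM X XN); rewrite tstar_edgesE tstar_setU1 // -tstar_edgesE; lia.
Qed.

Lemma bd_le_delete M N e k : e \in ground M -> ground N = ground M :\ e ->
  (forall X, X \subset ground N -> rk N X = rk M X) -> bd_le M k -> bd_le N k.
Proof.
move=> eM gN rkN; set G := ground M in eM gN *.
have GeG : G :\ e \subset G by exact: subD1set.
have eG : [set e] \subset G by rewrite sub1set.
apply: (bd_le_remove (e := e) (d := rk M G - rk M (G :\ e))) => //.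
- have := rk_submod GeG eG; rewrite setUC setD1K //.
  by have := rk1 eM; lia.
- by have := rk_mono (subxx G) GeG; rewrite -/G gN rkN ?gN //; lia.
move=> X XN; rewrite rkN //; split => //.
have XGe : X \subset G :\ e by rewrite -gN.
have eXG : e |: X \subset G by rewrite subUset eG (subset_trans XGe GeG).
have := rk_submod eXG GeG; have := rk_mono (subxx G) GeG.
have -> : (e |: X) :|: (G :\ e) = G by rewrite -setUA (setUidPr XGe) setD1K.
have -> : (e |: X) :&: (G :\ e) = X.
  by rewrite setIUl (setIidPl XGe) disjoint_setI0 ?set0U // disjoints1 setD11.
lia.
Qed.

Lemma bd_le_contract M N e k : e \in ground M -> ground N = ground M :\ e ->
  (forall X, X \subset ground N -> rk N X = rk M (e |: X) - rk M [set e]) ->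
  bd_le M k -> bd_le N k.
Proof.
move=> eM gN rkN; have eG : [set e] \subset ground M by rewrite sub1set.
have subG X : X \subset ground N -> X \subset ground M.
  by rewrite gN => /subset_trans; apply; exact: subD1set.
have eXG X : X \subset ground N -> e |: X \subset ground M.
  by move=> XN; rewrite subUset eG subG.
apply: (bd_le_remove (e := e) (d := rk M [set e])) => //; first exact: rk1.
  by rewrite rkN // gN setD1K //; have := rk_mono (subxx _) eG; lia.
move=> X XN; rewrite rkN //.
have := rk_submod eG (subG X XN); have := rk_mono (eXG X XN) (subsetUl _ X); lia.
Qed.

Lemma bd_le_restriction M S k : bd_le M k -> bd_le (restriction M S) k.
Proof.
move=> bdM; move: {2}#|ground M :\: S| (erefl #|ground M :\: S|) => n.
elim: n S => [|n IH] S cardGS.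
  apply: bd_le_ext bdM => //; apply/setIidPr.
  by move/eqP: cardGS; rewrite cards_eq0 setD_eq0.
have [e] : exists e, e \in ground M :\: S by apply/set0Pn; rewrite -card_gt0 cardGS.
rewrite inE => /andP[eNS eM].
apply: (@bd_le_delete (restriction M (e |: S)) _ e) => //=.
- by rewrite inE setU11.
- apply/setP => x; rewrite !inE.
  by case: (eqVneq x e) => [->|]; rewrite ?(negbTE eNS).
apply: IH; move: cardGS; rewrite (cardsD1 e) inE eNS eM add1n => -[<-].
by congr #|pred_of_set _|; apply/setP => x; rewrite !inE negb_or andbA.
Qed.

Lemma bd_le_contraction M C (C_M : C \subset ground M) k :
  bd_le M k -> bd_le (contraction C_M) k.
Proof.
move=> bdM; move: {2}#|C| (erefl #|C|) => n.
elim: n C C_M => [|n IH] C C_M cardC.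
  move/eqP: cardC; rewrite cards_eq0 => /eqP C0; subst C.
  apply: bd_le_ext bdM => [|X _] /=; first by rewrite setD0.
  by rewrite setU0 rk0 subn0.
have [e Ce] : exists e, e \in C by apply/set0Pn; rewrite -card_gt0 cardC.
have C'_M : C :\ e \subset ground M by exact: subset_trans (subD1set C e) C_M.
apply: (@bd_le_contract (contraction C'_M) _ e) => /=.
- by rewrite inE setD11 (subsetP C_M).
- by rewrite setDDl setUC setD1K.
- move=> X _; rewrite setUAC !setD1K // setUC.
  by have := rk_mono C_M (subD1set C e); lia.
by apply: IH; move: cardC; rewrite (cardsD1 e) Ce add1n => -[].
Qed.

Lemma bd_le_minor M M' k : is_minor M' M -> bd_le M k -> bd_le M' k.
Proof.
move=> [M'_M [C [C_M' rkM']]].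
move=> /(bd_le_contraction (subset_trans C_M' (subsetDl _ _))).
move=> /(bd_le_restriction (ground M')); apply: bd_le_ext => /= [|X].
  apply/esym/setIidPl; rewrite subsetD M'_M disjoint_sym.
  by move: C_M'; rewrite subsetD => /andP[].
by move=> /subset_trans/(_ (subsetIl _ _)); exact: rkM'.
Qed.

End Matroid.

Theorem proposition3p3 (E : finType) (M M' : matroid E) :
  is_minor M' M -> bd M' <= bd M.
Proof. by move=> minor; apply/bd_min/(bd_le_minor minor)/bd_le_bd. Qed.
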